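(* Assume the setup and monomial order in the context. The unique minimal (with respect to inclusion) subset of $X^*$ generating the monoid ideal $\mathrm{Tip}(I)$ of the free monoid $X^*$ is $$\{v_{j,n}v^\dagger_{1,r(i)}: v\in M,\ (j,i)\in[n]^2\}.$$ In particular $X\cap\mathrm{Tip}(I)=\emptyset$.
   Context: Let $k$ be a field and $n\ge 2$ an integer; write $[n]=\{1,\dots,n\}$ and $r(i)=n+1-i$. Let $X=\{u_{j,i},u^*_{j,i}:(j,i)\in[n]^2\}$ be a set of $2n^2$ distinct symbols and let $*$ be the involution of $X$ exchanging $u_{j,i}$ and $u^*_{j,i}$. Let $k\langle X\rangle$ be the free unital $k$-algebra on $X$, with $k$-basis the free monoid $X^*$ of monomials. For an $n\times n$ matrix $v=(v_{j,i})$ with entries in $X$ define $n\times n$ matrices $v^t,v^\star,v^\dagger$ with entries in $X$ by $v^t_{j,i}=v_{i,j}$, $v^\star_{j,i}=(v_{r(j),r(i)})^*$, $v^\dagger_{j,i}=(v_{r(i),r(j)})^*$. Let $u=(u_{j,i})$ and $M=\{u,u^t,u^\star,u^\dagger\}$. Let $I$ be the two-sided ideal generated by $R=\{\sum_{s=1}^n v_{j,r(s)}v^\dagger_{s,r(i)}-\delta_{j,i}1: v\in M,(j,i)\in[n]^2\}$. Monomial order: let $\le$ be the total order on $X$ with $u^*_{t,s}<u_{j,i}$ for all indices, $u_{t,s}<u_{j,i}$ iff $(t,s)<(j,i)$ lexicographically, and $u^*_{t,s}<u^*_{j,i}$ iff $(j,i)<(t,s)$ lexicographically; extend it degree-lexicographically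 to $X^*$. For $0\ne p\in k\langle X\rangle$, $\mathrm{tip}(p)$ is the $\le$-largest monomial with nonzero coefficient in $p$; $\mathrm{Tip}(I)=\{\mathrm{tip}(p):0\ne p\in I\}$, a monoid ideal (closed under multiplication by monomials on both sides). *)

From mathcomp Require Import all_boot all_order all_algebra.
Set Implicit Arguments. Unset Strict Implicit. Unset Printing Implicit Defensive.
Import GRing.Theory.
Local Open Scope ring_scope.

(* Indices [n] = {1..n} are represented 0-based by 'I_n; r(i) = n+1-i becomes
   rev_ord i (value n-1-i).  A symbol of X is (b, j, i): b = false is u_{j,i},
   b = true is u^*_{j,i}. *)
Definition sym (n : nat) := (bool * 'I_n * 'I_n)%type.

Definition ustar n (x : sym n) : sym n := let '(b, j, i) := x in (~~ b, j, i).

Definition smat n := 'I_n -> 'I_n -> sym n.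
Definition umat n : smat n := fun j i => (false, j, i).
Arguments umat : clear implicits.
Definition mtr n (v : smat n) : smat n := fun j i => v i j.
Definition mstar n (v : smat n) : smat n :=
  fun j i => ustar (v (rev_ord j) (rev_ord i)).
Definition mdag n (v : smat n) : smat n :=
  fun j i => ustar (v (rev_ord i) (rev_ord j)).

Definition Mmat n (k : 'I_4) : smat n :=
  if (val k == 0)%N then umat n else if (val k == 1)%N then mtr (umat n)
  else if (val k == 2)%N then mstar (umat n) else mdag (umat n).
Definition inM n (v : smat n) : Prop :=
  v = umat n \/ v = mtr (umat n) \/ v = mstar (umat n) \/ v = mdag (umat n).

(* Elements of k<X> are represented by formal finite sums: lists of
   (coefficient, monomial); coef p m is the coefficient of the monomial m. *)
Definition fpol (k : Type) n := seq (k * seq (sym n)).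
Definition coef (k : fieldType) n (p : fpol k n) (m : seq (sym n)) : k :=
  \sum_(t <- p | t.2 == m) t.1.

Definition relpol (k : fieldType) n (v : smat n) (j i : 'I_n) : fpol k n :=
  [seq (1, [:: v j (rev_ord s); mdag v s (rev_ord i)]) | s <- enum 'I_n]
  ++ (if j == i then [:: (-1, [::])] else [::]).

Definition mulmon (k : fieldType) n (c : k) (a : seq (sym n)) (p : fpol k n)
  (b : seq (sym n)) : fpol k n :=
  [seq (c * t.1, a ++ t.2 ++ b) | t <- p].

(* A generic element of the two-sided ideal I: a finite sum
   sum_t c_t a_t rho_t b_t with rho_t in R. *)
Definition Ielt (k : fieldType) n
  (ts : seq (k * seq (sym n) * ('I_4 * 'I_n * 'I_n) * seq (sym n))) : fpol k n :=
  flatten [seq let '(c, a, (q, j, i), b) := t in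
               mulmon c a (@relpol k n (@Mmat n q) j i) b | t <- ts].

Definition srank n (x : sym n) : nat :=
  let '(b, j, i) := x in
  if b then (n * n - 1 - (j * n + i))%N else (n * n + (j * n + i))%N.

Fixpoint lexlt (s t : seq nat) : bool :=
  match s, t with
  | [::], _ :: _ => true
  | x :: s', y :: t' => (x < y)%N || ((x == y) && lexlt s' t')
  | _, _ => false
  end.

Definition mlt n (m m' : seq (sym n)) : bool :=
  (size m < size m')%N ||
  ((size m == size m') && lexlt (map (@srank n) m) (map (@srank n) m')).
Definition mle n (m m' : seq (sym n)) : bool := (m == m') || mlt m m'.

Definition TipI (k : fieldType) n (m : seq (sym n)) : Prop :=
  exists ts : seq (k * seq (sym n) * ('I_4 * 'I_n * 'I_n) * seq (sym n)),
    coef (Ielt ts) m != 0 /\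
             forall m', coef (Ielt ts) m' != 0 -> mle m' m.

Definition mgen n (G T : seq (sym n) -> Prop) : Prop :=
  forall m, T m <-> exists a g b, G g /\ m = a ++ g ++ b.

Definition min_mgen n (G T : seq (sym n) -> Prop) : Prop :=
  mgen G T /\
  forall G', (forall m, G' m -> G m) -> mgen G' T -> forall m, G m -> G' m.

Definition Sgen n (m : seq (sym n)) : Prop :=
  exists (v : smat n) (j i l f : 'I_n),
    inM v /\ val l = n.-1 /\ val f = 0%N /\
    m = [:: v j l; mdag v f (rev_ord i)].

From mathcomp Require Import all_boot all_order all_algebra.
From mathcomp Require Import zify ring.
Set Implicit Arguments. Unset Strict Implicit. Unset Printing Implicit Defensive.
Import GRing.Theory.
Local Open Scope ring_scope.

(* The tips v_{j,n} v^dagger_{1,r(i)} of the 4n^2 defining relations form a Groebner basis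
   of I.  By Bergman's diamond lemma it suffices that the rewriting system
   "tip -> tip - relation" resolves all its ambiguities.  The only inclusions are between
   the relations of u and u^t at j = i = n (common tip u_{n,n} u^*_{n,n}) and of u^star
   and u^dagger at j = i = n; the only overlaps are between the relations of v and of its
   partner (u with u^dagger, u^t with u^star) whose tips meet in one letter.  Each
   ambiguity resolves after exchanging a double sum over the summation indices.  Hence
   the normal form is a well-defined linear functional that vanishes on I and is the
   identity on irreducible monomials, so the tip of every element of I contains some
   relation tip.  As all these tips have length 2, no one of them divides another, which
   makes them the unique minimal generating set of Tip(I) and keeps letters out of it. *)

Section UniformGenerators.
Variables (n d : nat) (S T : seq (sym n) -> Prop).
Hypotheses (size_S : forall s, S s -> size s = d) (S_gen : mgen S T).

Lemma mgen_size_ge m : T m -> (d <= size m)%N.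
Proof. by case/S_gen => a [g [b [/size_S size_g ->]]]; rewrite !size_cat size_g; lia. Qed.

Lemma mgen_factor_eq m a g b : S m -> T g -> m = a ++ g ++ b -> g = m.
Proof.
move=> /size_S size_m /mgen_size_ge le_d_g def_m.
have : size a == 0%N /\ size b == 0%N.
  by move: size_m; rewrite def_m !size_cat => ?; split; apply/eqP; lia.
by case=> /nilP a0 /nilP b0; rewrite def_m a0 b0 cats0.
Qed.

Lemma min_mgen_uniform G : min_mgen G T <-> (forall m, G m <-> S m).
Proof.
have S_T m : S m -> T m by move=> Sm; apply/S_gen; exists [::], m, [::]; rewrite cats0.
split=> [[G_gen G_min]|G_S].
- have G_T g : G g -> T g by move=> Gg; apply/G_gen; exists [::], g, [::]; rewrite cats0.
  have S_G m : S m -> G m.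
    move=> Sm; have /G_gen[a [g [b [Gg def_m]]]] := S_T m Sm.
    by rewrite -(mgen_factor_eq Sm (G_T g Gg) def_m).
  move=> m; split=> [Gm|]; last exact: S_G.
  suff : G m /\ S m by case.
  apply: (G_min (fun m => G m /\ S m)) Gm => [m' []//|m'].
  rewrite S_gen; split=> -[a [g [b [Gg ->]]]]; exists a, g, b; last by case: Gg.
  by split=> //; split=> //; apply: S_G.
- have T_G m : T m <-> exists a g b, G g /\ m = a ++ g ++ b.
    rewrite S_gen; split=> -[a [g [b [Gg ->]]]]; exists a, g, b; split=> //; exact/G_S.
  split=> // G' sub_G' G'_gen m Gm.
  have Sm : S m by apply/G_S.
  have /G'_gen[a [g [b [G'g def_m]]]] := S_T m Sm.
  have Tg : T g by apply/T_G; exists [::], g, [::]; rewrite cats0; split=> //; exact: sub_G'.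
  by rewrite -(mgen_factor_eq Sm Tg def_m).
Qed.

End UniformGenerators.

Lemma sum_fpol_coef (k : fieldType) n (p : fpol k n) (F : seq (sym n) -> k) :
  \sum_(t <- p) t.1 * F t.2 = \sum_(w <- undup (map snd p)) coef p w * F w.
Proof.
have sum_pred1 t : t \in p ->
    \sum_(w <- undup (map snd p) | w == t.2) t.1 * F w = t.1 * F t.2.
  move=> pt; rewrite -big_filter filter_pred1_uniq ?undup_uniq ?big_seq1 //.
  by rewrite mem_undup; apply: map_f.
rewrite big_seq; under eq_bigr => t pt do rewrite -(sum_pred1 t pt).
rewrite -big_seq (exchange_big_dep xpredT) //=.
by apply: eq_bigr => w _; rewrite /coef mulr_suml; apply: eq_big => // t /eqP ->.
Qed.

Lemma coef_eq0 (k : fieldType) n (p : fpol k n) w : w \notin map snd p -> coef p w = 0.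
Proof.
move=> p_w; rewrite /coef big_seq_cond big_pred0 // => t; apply/negbTE.
by apply: contra p_w => /andP[p_t /eqP <-]; apply: map_f.
Qed.

Lemma sum_delta_nonzero (R : pzRingType) m (i : 'I_m.+1) (F : 'I_m.+1 -> R) :
  \sum_(s < m.+1 | s != ord0) (s == i)%:R * F s = (i != ord0)%:R * F i.
Proof.
have [->|nz_i] := eqVneq i ord0.
  by rewrite mul0r big1 // => s /negbTE ->; rewrite mul0r.
rewrite (bigD1 i) //= eqxx mul1r big1 ?addr0 ?mul1r // => s /andP[_ /negbTE ->].
by rewrite mul0r.
Qed.

Lemma lexlt_cat p s t : lexlt (p ++ s) (p ++ t) = lexlt s t.
Proof. by elim: p => //= x p ->; rewrite ltnn eqxx. Qed.

Section DigitCode.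
Variable base : nat.
Implicit Types (s t : seq nat).

(* Digits are shifted by one so that longer sequences get larger codes, which makes
   [digit_code] monotone for the degree-lexicographic order. *)
Definition digit_code s : nat := foldl (fun c d => c * base + d.+1)%N 0%N s.

Lemma digit_code_cons d s :
  digit_code (d :: s) = (d.+1 * base ^ size s + digit_code s)%N.
Proof.
have foldlE c t :
    foldl (fun c d => c * base + d.+1)%N c t = (c * base ^ size t + digit_code t)%N.
  elim: t c => [|e t IHt] c /=; first by rewrite muln1 addn0.
  by rewrite /digit_code /= !IHt expnS; lia.
by rewrite /digit_code /= foldlE.
Qed.

Definition small_digits s := all (fun d => d.+1 < base)%N s.

Lemma digit_code_ub s : small_digits s -> (digit_code s < base ^ size s)%N.
Proof.
elim: s => [|d s IHs] //= /andP[lt_d /IHs]; rewrite digit_code_cons expnS; nia.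
Qed.

Lemma digit_code_lexlt s t : small_digits s -> size s = size t -> lexlt s t ->
  (digit_code s < digit_code t)%N.
Proof.
elim: s t => [|d s IHs] [|e t] //= /andP[_ small_s] [size_st].
rewrite !digit_code_cons size_st => /orP[lt_de|/andP[/eqP-> lex_st]].
  by have := digit_code_ub small_s; rewrite size_st; nia.
by rewrite ltn_add2l; apply: IHs.
Qed.

Lemma digit_code_deglex s t : small_digits s -> small_digits t ->
  (size s < size t)%N || (size s == size t) && lexlt s t ->
  (digit_code s < digit_code t)%N.
Proof.
move=> small_s small_t /orP[lt_st|/andP[/eqP size_st]]; last exact: digit_code_lexlt.
case: t small_t lt_st => [|e t] //= /andP[lt_e _]; rewrite ltnS digit_code_cons => le_st.
have le_exp : (base ^ size s <= base ^ size t)%N by rewrite leq_exp2l //; lia.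
by have := digit_code_ub small_s; nia.
Qed.

End DigitCode.

Section GroebnerBasis.
Variables (k : fieldType) (n : nat).
Local Notation N := n.+2.
Local Notation word := (seq (sym N)).

Definition rule := ('I_4 * 'I_N * 'I_N)%type.

(* [relmon (q, j, i) s] is the monomial v_{j,r(s)} v^dagger_{s,r(i)} of the relation
   indexed by v = Mmat q and (j, i), written out letter by letter (see [relmon_Mmat]);
   indices are 0-based, so the tip v_{j,n} v^dagger_{1,r(i)} is [relmon (q, j, i) ord0]. *)
Definition relmon (r : rule) (s : 'I_N) : word :=
  let '(q, j, i) := r in
  match val q with
  | 0 => [:: (false, j, rev_ord s); (true, i, rev_ord s)]
  | 1 => [:: (false, rev_ord s, j); (true, rev_ord s, i)]
  | 2 => [:: (true, rev_ord j, s); (false, rev_ord i, s)]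
  | _ => [:: (true, s, rev_ord j); (false, s, rev_ord i)]
  end%N.

Arguments relmon : simpl never.
Local Notation lead r := (relmon r ord0).

Lemma relmon_Mmat q j i s :
  [:: @Mmat N q j (rev_ord s); mdag (@Mmat N q) s (rev_ord i)] = relmon (q, j, i) s.
Proof.
by case: q => [[|[|[|[|q]]]] lt_q4] //; rewrite /Mmat /mdag /mstar /relmon /= ?rev_ordK.
Qed.

Lemma relmon_pair r s : exists x y, relmon r s = [:: x; y].
Proof.
by case: r => [[q j] i]; rewrite /relmon; case: (val q) => [|[|[|?]]]; do 2 eexists.
Qed.

Lemma size_relmon r s : size (relmon r s) = 2%N.
Proof. by have [x [y ->]] := relmon_pair r s. Qed.

Definition wcode (w : word) : nat := digit_code (2 * N * N).+1 (map (@srank N) w).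

Lemma srank_lt (x : sym N) : (srank x < 2 * N * N)%N.
Proof. by case: x => [[[] j] i] /=; have := ltn_ord j; have := ltn_ord i; nia. Qed.

Lemma small_digits_srank (w : word) : small_digits (2 * N * N).+1 (map (@srank N) w).
Proof. by apply/allP => _ /mapP[x _ ->]; rewrite ltnS srank_lt. Qed.

Lemma mlt_wcode w w' : mlt w w' -> (wcode w < wcode w')%N.
Proof. by move=> lt_ww'; apply: digit_code_deglex; rewrite ?small_digits_srank ?size_map. Qed.

Lemma mlt_irr (w : word) : ~~ mlt w w.
Proof. by apply/negP => /mlt_wcode; rewrite ltnn. Qed.

Lemma mlt_drop_lead (a b : word) r : mlt (a ++ b) (a ++ lead r ++ b).
Proof. by rewrite /mlt !size_cat size_relmon; apply/orP; left; lia. Qed.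

Lemma srank_relmon_lt r s : s != ord0 ->
  (srank (head (true, ord0, ord0) (relmon r s)) <
   srank (head (true, ord0, ord0) (lead r)))%N.
Proof.
case: r => [[q j] i]; rewrite -val_eqE /relmon /= => nz_s.
by have := ltn_ord s; have := ltn_ord j; case: (val q) => [|[|[|]]] /=; nia.
Qed.

Lemma mlt_relmon (a b : word) r s : s != ord0 ->
  mlt (a ++ relmon r s ++ b) (a ++ lead r ++ b).
Proof.
move=> /(srank_relmon_lt r) lt_head.
rewrite /mlt !size_cat !size_relmon eqxx ltnn /= !map_cat lexlt_cat.
have [x [y Es]] := relmon_pair r s; have [x' [y' E0]] := relmon_pair r ord0.
by move: lt_head; rewrite Es E0 /= => ->.
Qed.

Lemma wcode_drop_lead (a b : word) r : (wcode (a ++ b) < wcode (a ++ lead r ++ b))%N.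
Proof. exact/mlt_wcode/mlt_drop_lead. Qed.

Lemma wcode_relmon (a b : word) r s : s != ord0 ->
  (wcode (a ++ relmon r s ++ b) < wcode (a ++ lead r ++ b))%N.
Proof. by move=> nz_s; apply/mlt_wcode/mlt_relmon. Qed.

Definition lead_rule (x y : sym N) : option rule :=
  [pick r : rule | lead r == [:: x; y]].

Fixpoint first_redex (w : word) : option (word * rule * word) :=
  match w with
  | x :: ((y :: w') as t) =>
      if lead_rule x y is Some r then Some ([::], r, w')
      else if first_redex t is Some (a, r, b) then Some (x :: a, r, b) else None
  | _ => None
  end.

Lemma first_redex_cons2 x y w : first_redex [:: x, y & w] =
  if lead_rule x y is Some r then Some ([::], r, w)
  else if first_redex (y :: w) is Some (a, r, b) then Some (x :: a, r, b) else None.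
Proof. by []. Qed.

Lemma lead_rule_some x y r : lead_rule x y = Some r -> lead r = [:: x; y].
Proof. by rewrite /lead_rule; case: pickP => // r' /eqP ? [<-]. Qed.

Lemma lead_rule_none x y r : lead_rule x y = None -> lead r <> [:: x; y].
Proof. by rewrite /lead_rule; case: pickP => // /(_ r) /eqP. Qed.

Lemma first_redex_some w a r b : first_redex w = Some (a, r, b) -> w = a ++ lead r ++ b.
Proof.
elim: w a r b => [|x [|y w] IHw] a r b //; rewrite first_redex_cons2.
case Exy: (lead_rule x y) => [r'|]; first by case=> <- <- <-; rewrite (lead_rule_some Exy).
case: (first_redex (y :: w)) IHw => [[[a' r'] b']|] // IHw [<- <- <-].
by rewrite (IHw _ _ _ erefl).
Qed.

Lemma first_redex_leftmost w a r b a' r' b' : first_redex w = Some (a, r, b) ->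
  w = a' ++ lead r' ++ b' -> (size a <= size a')%N.
Proof.
have [x' [y' Er']] := relmon_pair r' ord0; rewrite Er'.
elim: w a r b a' => [|x [|y w] IHw] a r b a' //; rewrite first_redex_cons2.
case Exy: (lead_rule x y) => [r0|]; first by case=> <-.
case: (first_redex (y :: w)) IHw => [[[a1 r1] b1]|] // IHw [<- _ _].
case: a' => [|c a'] /= [Ex Ew]; last by rewrite ltnS (IHw _ _ _ _ erefl Ew).
by case: Ew => Ey _; case: (lead_rule_none (r := r') Exy); rewrite Er' Ex Ey.
Qed.

Lemma first_redex_none w a r b : first_redex w = None -> w <> a ++ lead r ++ b.
Proof.
have [x' [y' Er]] := relmon_pair r ord0; rewrite Er.
elim: w a => [|x [|y w] IHw] a; [by case: a|by case: a => [|? [|]]|].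
rewrite first_redex_cons2; case Exy: (lead_rule x y) => [r0|] //.
case: (first_redex (y :: w)) IHw => [[[a1 r1] b1]|] // IHw _.
case: a => [|c a] /= [Ex Ew]; last exact: IHw Ew.
by case: Ew => Ey _; apply: (lead_rule_none (r := r) Exy); rewrite Er Ex Ey.
Qed.

(* Modulo I, [lead (q, j, i)] equals [delta (q, j, i) - \sum_(s != ord0) relmon (q, j, i) s].
   [nf w m] is the coefficient of [m] in the normal form of [w] obtained by repeatedly
   rewriting the leftmost tip in this way; [wcode w] bounds the number of steps. *)
Definition delta (r : rule) : k := (r.1.2 == r.2)%:R.

Lemma deltaE (q : 'I_4) j i : delta (q, j, i) = (j == i)%:R.
Proof. by []. Qed.

Fixpoint nf_fuel (fuel : nat) (w m : word) : k :=
  if fuel is f.+1 then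
    if first_redex w is Some (a, r, b) then
      delta r * nf_fuel f (a ++ b) m
        - \sum_(s < N | s != ord0) nf_fuel f (a ++ relmon r s ++ b) m
    else (m == w)%:R
  else 0.

Definition nf (w m : word) : k := nf_fuel (wcode w).+1 w m.

Definition reduct (r : rule) (a b m : word) : k :=
  delta r * nf (a ++ b) m - \sum_(s < N | s != ord0) nf (a ++ relmon r s ++ b) m.

Lemma nf_fuel_stable f f' w m : (wcode w < f)%N -> (wcode w < f')%N ->
  nf_fuel f w m = nf_fuel f' w m.
Proof.
elim: f f' w => [|f IHf] [|f'] w //= lt_wf lt_wf'.
case E: (first_redex w) => [[[a r] b]|] //; have Ew := first_redex_some E.
congr (_ * _ - _).
  by apply: IHf; move: (wcode_drop_lead a b r); rewrite -Ew; lia.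
apply: eq_bigr => s nz_s; apply: IHf; move: (wcode_relmon a b r nz_s); rewrite -Ew; lia.
Qed.

Lemma nfE w m : nf w m =
  if first_redex w is Some (a, r, b) then reduct r a b m else (m == w)%:R.
Proof.
rewrite /nf /=; case E: (first_redex w) => [[[a r] b]|] //; have Ew := first_redex_some E.
congr (_ * _ - _).
  by apply: nf_fuel_stable => //; move: (wcode_drop_lead a b r); rewrite -Ew; lia.
apply: eq_bigr => s nz_s; apply: nf_fuel_stable => //.
by move: (wcode_relmon a b r nz_s); rewrite -Ew; lia.
Qed.

Lemma nf_irreducible w : first_redex w = None -> nf w w = 1.
Proof. by move=> E; rewrite nfE E eqxx. Qed.

Lemma nf_support w m : nf w m != 0 -> (wcode m <= wcode w)%N.
Proof.
elim: {w}(wcode w).+1 {-2}w (ltnSn (wcode w)) => [|c IHc] w // lt_wc.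
rewrite nfE; case E: (first_redex w) => [[[a r] b]|]; last first.
  by have [->|] := eqVneq m w; rewrite ?eqxx ?leqnn // => _; rewrite eqxx.
rewrite /reduct; have Ew := first_redex_some E.
have [nf0|nz_nf _] := eqVneq (nf (a ++ b) m) 0; last first.
  have := wcode_drop_lead a b r; rewrite -Ew => lt_ab.
  by apply: leq_trans (ltnW lt_ab); apply: IHc nz_nf; lia.
rewrite nf0 mulr0 sub0r oppr_eq0 => nz_sum.
have [s nz_s nz_nfs] : exists2 s : 'I_N, s != ord0 & nf (a ++ relmon r s ++ b) m != 0.
  apply/exists_inP; apply: contraNT nz_sum => /exists_inPn nf0s.
  by apply/eqP; apply: big1 => s /nf0s /negPn /eqP.
have := wcode_relmon a b r nz_s; rewrite -Ew => lt_s.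
by apply: leq_trans (ltnW lt_s); apply: IHc nz_nfs; lia.
Qed.

(* Exchanges u and u^t, and u^star and u^dagger (the indices of [Mmat]). *)
Definition qswap (q : 'I_4) : 'I_4 :=
  match val q with
  | 0 => @Ordinal 4 1 isT
  | 1 => @Ordinal 4 0 isT
  | 2 => @Ordinal 4 3 isT
  | _ => @Ordinal 4 2 isT
  end%N.

Local Notation diag q := (q, rev_ord ord0, rev_ord ord0).

Lemma lead_eq_cases (r' r : rule) : lead r' = lead r ->
  r' = r \/ exists q, r' = diag q /\ r = diag (qswap q).
Proof.
case: r' => [[q' j'] i']; case: r => [[q j] i].
have := ltn_ord j; have := ltn_ord j'; have := ltn_ord i; have := ltn_ord i'.
case: q' => [[|[|[|[|q']]]] lt_q'] //; case: q => [[|[|[|[|q]]]] lt_q] //.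
all: rewrite /relmon /= => lt_i' lt_i lt_j' lt_j [=].
all: move=> *; subst.
all: first [ by left; congr (_, _, _); apply: val_inj => /=; lia
  | by right; exists (Ordinal lt_q'); split; congr (_, _, _); apply: val_inj => /=; lia ].
Qed.

Lemma sym_eq_vals (b b' : bool) (j i j' i' : 'I_N) :
  (b, j, i) = (b', j', i') :> sym N -> [/\ b = b', val j = val j' & val i = val i'].
Proof. by case=> -> -> ->. Qed.

(* [rev_ord q] exchanges u and u^dagger, and u^t and u^star. *)
Lemma lead_overlap_cases (r' r : rule) x y z : lead r' = [:: x; y] -> lead r = [:: y; z] ->
  exists q j i, r' = (q, j, ord0) /\ r = (rev_ord q, ord0, i).
Proof.
case: r' => [[q' j'] i']; case: r => [[q j] i].
have := ltn_ord j; have := ltn_ord j'; have := ltn_ord i; have := ltn_ord i'.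
case: q' => [[|[|[|[|q']]]] lt_q'] //; case: q => [[|[|[|[|q]]]] lt_q] //.
all: rewrite /relmon /= => lt_i' lt_i lt_j' lt_j.
all: move=> /(congr1 (nth x ^~ 1%N)) /= <- /(congr1 (nth x ^~ 0%N)) /= /sym_eq_vals[//= _ Ej Ei].
all: first [ lia
  | by exists (Ordinal lt_q'), j', i; split; congr (_, _, _); apply: val_inj => /=; lia ].
Qed.

Definition nf_reduces_at (w : word) :=
  forall a r b m, w = a ++ lead r ++ b -> nf w m = reduct r a b m.

Definition nf_reduces_below (w : word) :=
  forall w', (wcode w' < wcode w)%N -> nf_reduces_at w'.

Lemma reduct_disjoint (a c b : word) r' r m :
  nf_reduces_below (a ++ lead r' ++ c ++ lead r ++ b) ->
  reduct r' a (c ++ lead r ++ b) m = reduct r (a ++ lead r' ++ c) b m.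
Proof.
move=> below_w.
have nf_r' : nf (a ++ c ++ lead r ++ b) m = reduct r (a ++ c) b m.
  by apply: below_w (wcode_drop_lead a (c ++ lead r ++ b) r') _ _ _ _ _; rewrite catA.
have nf_r's s' : s' != ord0 ->
    nf (a ++ relmon r' s' ++ c ++ lead r ++ b) m = reduct r (a ++ relmon r' s' ++ c) b m.
  move=> nz_s'; apply: below_w (wcode_relmon a (c ++ lead r ++ b) r' nz_s') _ _ _ _ _.
  by rewrite -!catA.
have nf_r : nf (a ++ lead r' ++ c ++ b) m = reduct r' a (c ++ b) m.
  apply: below_w _ _ _ _ _ (erefl _).
  by have := wcode_drop_lead (a ++ lead r' ++ c) b r; rewrite -!catA.
have nf_rs s : s != ord0 ->
    nf (a ++ lead r' ++ c ++ relmon r s ++ b) m = reduct r' a (c ++ relmon r s ++ b) m.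
  move=> nz_s; apply: below_w _ _ _ _ _ (erefl _).
  by have := wcode_relmon (a ++ lead r' ++ c) b r nz_s; rewrite -!catA.
have reduct_cat2 x y : reduct r (x ++ y) b m =
    delta r * nf (x ++ y ++ b) m - \sum_(s < N | s != ord0) nf (x ++ y ++ relmon r s ++ b) m.
  by rewrite /reduct -catA; under eq_bigr do rewrite -catA.
have reduct_cat3 x y z : reduct r (x ++ y ++ z) b m =
    delta r * nf (x ++ y ++ z ++ b) m
      - \sum_(s < N | s != ord0) nf (x ++ y ++ z ++ relmon r s ++ b) m.
  by rewrite /reduct -!catA; under eq_bigr do rewrite -!catA.
rewrite {1}/reduct nf_r' (eq_bigr _ nf_r's) [RHS]/reduct -!catA nf_r.
under [in RHS]eq_bigr => s nz_s do rewrite -!catA (nf_rs s nz_s).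
rewrite reduct_cat2; under eq_bigr do rewrite reduct_cat3.
rewrite /reduct !sumrB -!mulr_sumr.
by rewrite (exchange_big _ _ _ _ _ (fun s s' => nf (a ++ relmon r' s' ++ c ++ relmon r s ++ b) m));
  ring.
Qed.

Lemma relmon_qswap q s t :
  relmon (qswap q, rev_ord s, rev_ord s) t = relmon (q, rev_ord t, rev_ord t) s.
Proof. by case: q => [[|[|[|[|q]]]] lt_q] //; rewrite /relmon /= !rev_ordK. Qed.

Lemma reduct_qswap q a b m : nf_reduces_below (a ++ lead (diag q) ++ b) ->
  reduct (diag q) a b m = reduct (diag (qswap q)) a b m.
Proof.
move=> below_w.
have below_w' : nf_reduces_below (a ++ lead (diag (qswap q)) ++ b) by rewrite relmon_qswap.
have nf_s s : s != ord0 ->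
    nf (a ++ relmon (diag q) s ++ b) m = reduct (qswap q, rev_ord s, rev_ord s) a b m.
  by move=> nz_s; apply: below_w (wcode_relmon a b _ nz_s) _ _ _ _ _; rewrite relmon_qswap.
have nf_s' s : s != ord0 ->
    nf (a ++ relmon (diag (qswap q)) s ++ b) m = reduct (q, rev_ord s, rev_ord s) a b m.
  by move=> nz_s; apply: below_w' (wcode_relmon a b _ nz_s) _ _ _ _ _; rewrite relmon_qswap.
rewrite /reduct !deltaE eqxx mul1r (eq_bigr _ nf_s) (eq_bigr _ nf_s'); congr (_ - _).
rewrite /reduct.
under eq_bigr => s _ do rewrite deltaE eqxx mul1r.
under [RHS]eq_bigr => s _ do rewrite deltaE eqxx mul1r.
under eq_bigr => s _ do under eq_bigr => t _ do rewrite relmon_qswap.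
by rewrite !sumrB exchange_big.
Qed.

Lemma relmon_overlap q j i s t (x0 : sym N) :
  head x0 (relmon (q, j, ord0) s) :: relmon (rev_ord q, s, i) t =
  relmon (q, j, t) s ++ [:: last x0 (relmon (rev_ord q, ord0, i) t)].
Proof. by case: q => [[|[|[|[|q]]]] lt_q]; rewrite /relmon. Qed.

Lemma relmon_overlap_corner q j i (x0 : sym N) :
  head x0 (relmon (q, j, ord0) i) = last x0 (relmon (rev_ord q, ord0, i) j).
Proof. by case: q => [[|[|[|[|q]]]] lt_q]; rewrite /relmon. Qed.

Lemma reduct_overlap q j i x y z a b m :
  lead (q, j, ord0) = [:: x; y] -> lead (rev_ord q, ord0, i) = [:: y; z] ->
  nf_reduces_below (a ++ [:: x; y; z] ++ b) ->
  reduct (q, j, ord0) a (z :: b) m = reduct (rev_ord q, ord0, i) (a ++ [:: x]) b m.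
Proof.
move=> Er' Er below_w.
pose xs s := head x (relmon (q, j, ord0) s).
pose zt t := last x (relmon (rev_ord q, ord0, i) t).
have ovl s t : xs s :: relmon (rev_ord q, s, i) t = relmon (q, j, t) s ++ [:: zt t].
  exact: relmon_overlap.
have xs0 : xs ord0 = x by rewrite /xs Er'.
have zt0 : zt ord0 = z by rewrite /zt Er.
have nf_left s : s != ord0 ->
    nf (a ++ relmon (q, j, ord0) s ++ z :: b) m =
    reduct (rev_ord q, s, i) (a ++ [:: xs s]) b m.
  move=> nz_s; apply: below_w.
    by have := wcode_relmon a (z :: b) (q, j, ord0) nz_s; rewrite Er'.
  by rewrite [RHS]/= -catA /= -cat_cons ovl -catA /= zt0.
have nf_right t : t != ord0 ->
    nf ((a ++ [:: x]) ++ relmon (rev_ord q, ord0, i) t ++ b) m =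
    reduct (q, j, t) a (zt t :: b) m.
  move=> nz_t; apply: below_w.
    have := wcode_relmon (a ++ [:: x]) b (rev_ord q, ord0, i) nz_t.
    by rewrite Er -!catA.
  by rewrite -catA /= -xs0 -cat_cons ovl -catA.
rewrite {1}/reduct (eq_bigr _ nf_left) [RHS]/reduct (eq_bigr _ nf_right) /reduct !sumrB.
have -> : \sum_(s < N | s != ord0) \sum_(t < N | t != ord0)
      nf ((a ++ [:: xs s]) ++ relmon (rev_ord q, s, i) t ++ b) m =
    \sum_(t < N | t != ord0) \sum_(s < N | s != ord0)
      nf (a ++ relmon (q, j, t) s ++ zt t :: b) m.
  rewrite exchange_big; apply: eq_bigr => t _; apply: eq_bigr => s _.
  by rewrite -catA /= -cat_cons ovl -catA.
have subrBr (u v w : k) : u - (v - w) = u - v + w by ring.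
rewrite !subrBr; congr (_ + _).
under eq_bigr => s _ do rewrite deltaE -catA.
under [X in _ = _ - X]eq_bigr => t _ do rewrite deltaE eq_sym.
rewrite !sum_delta_nonzero !deltaE -catA /= -xs0 -zt0.
have := relmon_overlap_corner q j i x; rewrite -/(xs i) -/(zt j).
by case: (eqVneq j ord0) => [->|_]; case: (eqVneq i ord0) => [->|_] /= ->; ring.
Qed.

Lemma reduct_inclusion a b r' r m : lead r' = lead r ->
  nf_reduces_below (a ++ lead r ++ b) -> reduct r' a b m = reduct r a b m.
Proof.
case/lead_eq_cases => [-> //|[q [-> ->]]] below_w.
by rewrite reduct_qswap //; rewrite relmon_qswap in below_w.
Qed.

(* By induction on [wcode w], compare a redex of [w] with the leftmost one [a' ++ lead r' ++ b']:
   at offset [d] with [a = a' ++ d], the tips coincide, overlap in one letter, or are disjoint. *)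
Lemma nf_reduces_everywhere w : nf_reduces_at w.
Proof.
elim: {w}(wcode w).+1 {-2}w (ltnSn (wcode w)) => [|f IHf] w // lt_wf.
have below_w : nf_reduces_below w by move=> w' lt_w'; apply: IHf; lia.
move=> a r b m Ew; case E: (first_redex w) => [[[a' r'] b']|]; last first.
  by case: (first_redex_none E Ew).
rewrite nfE E; have Ew' := first_redex_some E.
have [d def_a] : exists d, a = a' ++ d.
  exists (drop (size a') a); rewrite -{1}(cat_take_drop (size a') a); congr (_ ++ _).
  have := congr1 (take (size a')) Ew; rewrite {1}Ew' take_size_cat // takel_cat //.
  exact: first_redex_leftmost E Ew.
have /eqP : d ++ lead r ++ b = lead r' ++ b'.
  by have := congr1 (drop (size a')) Ew; rewrite {1}Ew' def_a -catA !drop_size_cat.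
rewrite {}Ew {}def_a in below_w *; have [y [z Er]] := relmon_pair r ord0.
case: d below_w => [|x1 [|x2 c]].
- rewrite /= eqseq_cat ?size_relmon // => below_w /andP[/eqP/esym Elead /eqP <-].
  by rewrite cats0 in below_w *; apply: reduct_inclusion.
- move=> below_w; rewrite Er -[[:: x1] ++ _]/([:: x1; y] ++ z :: b) eqseq_cat ?size_relmon //.
  case/andP => /eqP/esym Er' /eqP <-.
  have [q [j [i [def_r' def_r]]]] := lead_overlap_cases Er' Er; subst r' r.
  by rewrite -catA Er in below_w; apply: reduct_overlap Er' Er below_w.
- move=> below_w; rewrite -[[:: x1, x2 & c] ++ _]/([:: x1; x2] ++ c ++ lead r ++ b).
  rewrite eqseq_cat ?size_relmon //.
  case/andP => /eqP Er' /eqP <-.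
  rewrite -[[:: x1, x2 & c]]/([:: x1; x2] ++ c) Er'; apply: reduct_disjoint.
  by rewrite -catA -[[:: x1, x2 & c]]/([:: x1; x2] ++ c) Er' -catA in below_w.
Qed.

Lemma nf_reduct a r b m : nf (a ++ lead r ++ b) m = reduct r a b m.
Proof. exact: nf_reduces_everywhere. Qed.

Lemma mulmon_relpol (c : k) a b q j i :
  mulmon c a (relpol k (@Mmat N q) j i) b =
  [seq (c, a ++ relmon (q, j, i) s ++ b) | s <- enum 'I_N]
    ++ (if j == i then [:: (- c, a ++ b)] else [::]).
Proof.
rewrite /mulmon /relpol map_cat -map_comp; congr (_ ++ _).
  by apply: eq_map => s; rewrite -relmon_Mmat /= mulr1.
by case: (j == i); rewrite //= mulrN1.
Qed.

Lemma nf_relation (c : k) a b q j i m :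
  \sum_(t <- mulmon c a (relpol k (@Mmat N q) j i) b) t.1 * nf t.2 m = 0.
Proof.
rewrite mulmon_relpol big_cat big_map big_enum (bigD1 ord0) //= nf_reduct /reduct deltaE.
rewrite -mulr_sumr; case: (j == i); rewrite ?big_cons ?big_nil /=; ring.
Qed.

Lemma nf_ideal ts m : \sum_(t <- Ielt ts) t.1 * nf t.2 m = 0.
Proof.
rewrite /Ielt big_flatten big_map big1 // => -[[[c a] [[q j] i]] b] _.
exact: nf_relation.
Qed.

Definition reducible (m : word) := exists a r b, m = a ++ lead r ++ b.

Lemma tip_reducible m : TipI k m -> reducible m.
Proof.
case=> ts [nz_m tip_m]; case E: (first_redex m) => [[[a r] b]|].
  by exists a, r, b; apply: first_redex_some.
(* [nf^~ m] vanishes on I, and on the support of an element with tip [m] it is the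
   indicator of [m] when [m] is irreducible. *)
have nf_coef w : coef (Ielt ts) w != 0 -> nf w m = (w == m)%:R.
  move=> /tip_m; rewrite /mle; have [-> _|_ /= lt_wm] := eqVneq w m.
    exact: nf_irreducible.
  apply/eqP; apply: contraLR lt_wm => /nf_support le_mw.
  by apply/negP => /mlt_wcode; rewrite ltnNge le_mw.
have : \sum_(t <- Ielt ts) t.1 * (t.2 == m)%:R = 0.
  rewrite -[RHS](nf_ideal ts m).
  move: (sum_fpol_coef (Ielt ts) (fun w => (w == m)%:R)) => /= ->.
  move: (sum_fpol_coef (Ielt ts) (nf^~ m)) => /= ->; apply: eq_bigr => w _.
  by have [->|/nf_coef ->] := eqVneq (coef (Ielt ts) w) 0; rewrite ?mul0r.
move=> sum0; suff coef0 : coef (Ielt ts) m = 0 by rewrite coef0 eqxx in nz_m.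
by rewrite /coef big_mkcond -[RHS]sum0; apply: eq_bigr => t _; rewrite mulr_natr mulrb.
Qed.

Lemma reducible_tip w : reducible w -> TipI k w.
Proof.
case=> a [[[q j] i] [b ->]]; exists [:: (1, a, (q, j, i), b)].
rewrite /Ielt /= cats0 mulmon_relpol; set m := a ++ _ ++ b; set p := _ ++ _.
have mlt_m s : s != ord0 -> mlt (a ++ relmon (q, j, i) s ++ b) m by exact: mlt_relmon.
have le_m m' : m' \in map snd p -> mle m' m.
  rewrite map_cat mem_cat -map_comp => /orP[/mapP[s _ ->]|] /=.
    by rewrite /mle; have [->|/mlt_m->] := eqVneq s ord0; rewrite ?eqxx ?orbT.
  by case: (j == i) => //; rewrite inE => /eqP->; rewrite /mle mlt_drop_lead orbT.
have ne_m m' : mlt m' m -> (m' == m) = false.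
  by move=> lt_m'm; apply: contraTF lt_m'm => /eqP->; apply: mlt_irr.
have coef_m : coef p m = 1.
  rewrite /coef big_cat big_map big_enum_cond /= (bigD1 ord0) //= big1 => [|s /andP[]].
    by case: (j == i); rewrite /= ?big_cons ?big_nil ?ne_m ?mlt_drop_lead ?addr0.
  by move=> + /mlt_m/ne_m => ->.
split=> [|m' nz_m']; first by rewrite coef_m oner_neq0.
by apply: le_m; apply: contraR nz_m' => /coef_eq0 ->; rewrite eqxx.
Qed.

Lemma Sgen_lead m : Sgen m <-> exists r, m = lead r.
Proof.
split=> [[v [j [i [l [f [Mv [l_max [f0 ->]]]]]]]]|[[[q j] i] ->]].
  have -> : l = rev_ord ord0 by apply: val_inj; rewrite l_max /= subn1.
  have -> : f = ord0 by apply: val_inj.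
  have [q ->] : exists q, v = @Mmat N q.
    by case: Mv => [->|[->|[->|->]]]; [exists (@Ordinal 4 0 isT)|exists (@Ordinal 4 1 isT)
      |exists (@Ordinal 4 2 isT)|exists (@Ordinal 4 3 isT)].
  by exists (q, j, i); rewrite relmon_Mmat.
exists (@Mmat N q), j, i, (rev_ord ord0), ord0; rewrite relmon_Mmat /= subn1; split=> //.
by case: q => [[|[|[|[|q]]]] lt_q] //; rewrite /inM /Mmat /=; auto.
Qed.

Lemma size_Sgen (m : word) : Sgen m -> size m = 2%N.
Proof. by case/Sgen_lead => r ->; apply: size_relmon. Qed.

Lemma tip_mgen : mgen (@Sgen N) (@TipI k N).
Proof.
move=> m; split=> [/tip_reducible[a [r [b ->]]]|[a [g [b [/Sgen_lead[r ->] ->]]]]].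
  by exists a, (lead r), b; split=> //; apply/Sgen_lead; exists r.
by apply: reducible_tip; exists a, r, b.
Qed.

End GroebnerBasis.

Theorem proposition4p1 (k : fieldType) (n : nat) (hn : (2 <= n)%N) :
  (forall G : seq (sym n) -> Prop,
     min_mgen G (@TipI k n) <-> (forall m, G m <-> Sgen m)) /\
  (forall x : sym n, ~ TipI k [:: x]).
Proof.
case: n hn => [|[|n]] // _; have gen := @tip_mgen k n.
split; first exact: min_mgen_uniform (size_Sgen (n := n)) gen.
by move=> x /(mgen_size_ge (size_Sgen (n := n)) gen).
Qed.
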